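(* Let $S$ be a conical category and $a,b\in S$. (1) If $S$ is left cancellative and $\mathrm{s}(a)=\mathrm{s}(b)$, then $\varepsilon_S(a)$ and $\varepsilon_S(b)$ have a left gcd in $\mathrm{U_{mon}}(S)$ iff $a$ and $b$ have a left gcd $a\wedge b$ in $S$, and in that case $\varepsilon_S(a\wedge b)$ is the left gcd of $\varepsilon_S(a),\varepsilon_S(b)$. (2) If $S$ is right cancellative and $\mathrm{t}(a)=\mathrm{t}(b)$, then $\varepsilon_S(a)$ and $\varepsilon_S(b)$ have a right gcd in $\mathrm{U_{mon}}(S)$ iff $a$ and $b$ have a right gcd $a\mathbin{\widetilde\wedge} b$ in $S$, and in that case $\varepsilon_S(a\mathbin{\widetilde\wedge} b)$ is the right gcd of $\varepsilon_S(a),\varepsilon_S(b)$.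
   Context: Categories are arrow-only: a set $S$ with partial associative multiplication, identities $\mathrm{Id}\,S$, source/target identities $\mathrm{s}(x),\mathrm{t}(x)$. $S$ is conical if $xy\in\mathrm{Id}\,S$ implies $x\in\mathrm{Id}\,S$. $\mathrm{U_{mon}}(S)$ is the monoid presented by generators $\varepsilon_S(x)$ ($x\in S$) and relations $\varepsilon_S(e)=1$ ($e\in\mathrm{Id}\,S$), $\varepsilon_S(x)\varepsilon_S(y)=\varepsilon_S(xy)$ whenever $xy$ is defined. In a category or monoid $C$, $a\leqslant_C b$ iff $b=ax$ for some $x$, and $a\mathbin{\widetilde\leqslant}_C b$ iff $b=xa$ for some $x$; a left gcd (resp. right gcd) of a pair is a greatest lower bound with respect to $\leqslant$ (resp. $\mathbin{\widetilde\leqslant}$). *)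

From Stdlib Require Import List.
Import ListNotations.
Set Implicit Arguments.

(* Convention: the product x*y is defined iff t(x) = s(y); [comp] is total,
   its values outside the domain of definition are irrelevant junk. *)
Record category := Category {
  carrier :> Type;
  src : carrier -> carrier;
  tgt : carrier -> carrier;
  comp : carrier -> carrier -> carrier;
  src_src : forall x, src (src x) = src x;
  tgt_src : forall x, tgt (src x) = src x;
  src_tgt : forall x, src (tgt x) = tgt x;
  tgt_tgt : forall x, tgt (tgt x) = tgt x;
  src_comp : forall x y, tgt x = src y -> src (comp x y) = src x;
  tgt_comp : forall x y, tgt x = src y -> tgt (comp x y) = tgt y;
  comp_src : forall x, comp (src x) x = x;
  comp_tgt : forall x, comp x (tgt x) = x;
  compA : forall x y z, tgt x = src y -> tgt y = src z ->
            comp (comp x y) z = comp x (comp y z)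
}.

Arguments src {c} _.
Arguments tgt {c} _.
Arguments comp {c} _ _.

Section Cat.
Variable S : category.

Definition defined (x y : S) : Prop := tgt x = src y.

Definition is_id (e : S) : Prop := src e = e.

Definition conical : Prop :=
  forall x y : S, defined x y -> is_id (comp x y) -> is_id x.

Definition left_cancellative : Prop :=
  forall x y z : S, defined x y -> defined x z -> comp x y = comp x z -> y = z.

Definition right_cancellative : Prop :=
  forall x y z : S, defined y x -> defined z x -> comp y x = comp z x -> y = z.

Definition leS (a b : S) : Prop := exists x, defined a x /\ b = comp a x.
Definition tleS (a b : S) : Prop := exists x, defined x a /\ b = comp x a.

(* U_mon(S): the free monoid on S (words = lists, product = concatenation)
   modulo the congruence generated by eps(e) = 1 (e identity) and
   eps(x) eps(y) = eps(xy) when xy is defined. *)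
Inductive umon_eq : list S -> list S -> Prop :=
  | ue_id : forall e, is_id e -> umon_eq [e] []
  | ue_mul : forall x y, defined x y -> umon_eq [x; y] [comp x y]
  | ue_refl : forall u, umon_eq u u
  | ue_sym : forall u v, umon_eq u v -> umon_eq v u
  | ue_trans : forall u v w, umon_eq u v -> umon_eq v w -> umon_eq u w
  | ue_ctx : forall p q u v, umon_eq u v -> umon_eq (p ++ u ++ q) (p ++ v ++ q).

Definition eps (x : S) : list S := [x].

Definition leU (u v : list S) : Prop := exists w, umon_eq v (u ++ w).
Definition tleU (u v : list S) : Prop := exists w, umon_eq v (w ++ u).
End Cat.
Arguments umon_eq {S} _ _.
Arguments eps {S} _.
Arguments leU {S} _ _.
Arguments tleU {S} _ _.
Arguments leS {S} _ _.
Arguments tleS {S} _ _.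

Definition is_glb (T : Type) (le : T -> T -> Prop) (x y g : T) : Prop :=
  le g x /\ le g y /\ (forall h, le h x -> le h y -> le h g).

(* For a conical category S, every element of U_mon(S) has a unique reduced
   word: no identity letters and no two adjacent composable letters.  It is
   computed by pushing letters in from the left, composing with the current
   head whenever possible; conicality guarantees that composites of
   non-identities stay non-identities, which makes the result independent of
   the presentation.  Reading off reduced words, the left divisors of
   eps(a) are exactly the eps(c) with c <= a (the unit being eps(s(a))), so
   left gcds of eps(a) and eps(b) correspond to left gcds of a and b.  The
   right-hand statement is the left one in the opposite category, reversing
   words. *)

From Stdlib Require Import List Classical ClassicalEpsilon.
Import ListNotations.
Set Implicit Arguments.

Section Category.
Variable S : category.

Lemma is_id_iff_tgt (e : S) : is_id S e <-> tgt e = e.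
Proof.
  unfold is_id. split; intro H.
  - rewrite <- H at 1. rewrite tgt_src. exact H.
  - rewrite <- H. apply src_tgt.
Qed.

Lemma comp_id_l (e y : S) : is_id S e -> defined S e y -> comp e y = y.
Proof.
  intros I D. unfold defined in D. rewrite (proj1 (is_id_iff_tgt e) I) in D.
  subst e. apply comp_src.
Qed.

Lemma comp_id_r (x e : S) : is_id S e -> defined S x e -> comp x e = x.
Proof. unfold is_id, defined. intros I D. rewrite I in D. rewrite <- D. apply comp_tgt. Qed.

Lemma leS_refl (a : S) : leS a a.
Proof. exists (tgt a). split; [symmetry; apply src_tgt | now rewrite comp_tgt]. Qed.

Lemma leS_src (a : S) : leS (src a) a.
Proof. exists a. split; [apply tgt_src | now rewrite comp_src]. Qed.

Lemma leS_src_eq (c a : S) : leS c a -> src c = src a.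
Proof. intros [x [D E]]. subst a. now rewrite src_comp. Qed.

Lemma leS_id_src (h a : S) : is_id S h -> leS h a -> h = src a.
Proof. unfold is_id. intros I H. rewrite <- I. exact (leS_src_eq H). Qed.

Lemma umon_eq_app_r (u v w : list S) : umon_eq u v -> umon_eq (u ++ w) (v ++ w).
Proof. exact (ue_ctx [] w (u:=u) (v:=v)). Qed.

Lemma umon_eq_cons (x : S) (u v : list S) : umon_eq u v -> umon_eq (x :: u) (x :: v).
Proof. intro E. pose proof (ue_ctx [x] [] E) as H. now rewrite !app_nil_r in H. Qed.

Lemma leU_eq_l (u u' v : list S) : umon_eq u u' -> leU u' v -> leU u v.
Proof.
  intros E [w H]. exists w. eapply ue_trans; [exact H|].
  apply umon_eq_app_r, ue_sym, E.
Qed.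

Lemma leU_eq_r (u v v' : list S) : umon_eq v v' -> leU u v -> leU u v'.
Proof. intros E [w H]. exists w. eapply ue_trans; [apply ue_sym, E | exact H]. Qed.

Lemma leU_eps_of_leS (c a : S) : leS c a -> leU (eps c) (eps a).
Proof. intros [x [D E]]. exists [x]. subst a. apply ue_sym, ue_mul, D. Qed.

Lemma is_glb_leU_eq (x y g g' : list S) :
  umon_eq g g' -> is_glb leU x y g -> is_glb leU x y g'.
Proof.
  intros E [Gx [Gy Gm]]. split; [|split].
  - apply leU_eq_l with g; [apply ue_sym, E | exact Gx].
  - apply leU_eq_l with g; [apply ue_sym, E | exact Gy].
  - intros h Hx Hy. apply leU_eq_r with g; auto.
Qed.

Definition push (x : S) (w : list S) : list S :=
  if excluded_middle_informative (is_id S x) then w else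
  match w with
  | [] => [x]
  | z :: w' => if excluded_middle_informative (defined S x z)
               then comp x z :: w' else x :: z :: w'
  end.

Definition pushs (u w : list S) : list S := fold_right push w u.

Definition nf (u : list S) : list S := pushs u [].

Fixpoint reduced (w : list S) : Prop :=
  match w with
  | [] => True
  | x :: t => ~ is_id S x /\
      match t with [] => True | y :: _ => ~ defined S x y end /\ reduced t
  end.

Lemma push_id (x : S) (w : list S) : is_id S x -> push x w = w.
Proof. intro I. unfold push. now destruct (excluded_middle_informative (is_id S x)). Qed.

Lemma push_nil (x : S) : ~ is_id S x -> push x [] = [x].
Proof. intro I. unfold push. now destruct (excluded_middle_informative (is_id S x)). Qed.

Lemma push_merge (x z : S) (w : list S) :
  ~ is_id S x -> defined S x z -> push x (z :: w) = comp x z :: w.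
Proof.
  intros I D. unfold push.
  destruct (excluded_middle_informative (is_id S x)); [contradiction|].
  now destruct (excluded_middle_informative (defined S x z)).
Qed.

Lemma push_cons (x z : S) (w : list S) :
  ~ is_id S x -> ~ defined S x z -> push x (z :: w) = x :: z :: w.
Proof.
  intros I D. unfold push.
  destruct (excluded_middle_informative (is_id S x)); [contradiction|].
  now destruct (excluded_middle_informative (defined S x z)).
Qed.

Lemma push_head (x : S) (w : list S) :
  ~ is_id S x -> exists h t, push x w = h :: t /\ src h = src x.
Proof.
  intro I. destruct w as [|z w].
  - rewrite push_nil by exact I. eauto.
  - destruct (classic (defined S x z)) as [D|D].
    + rewrite push_merge by assumption. exists (comp x z), w.
      split; [reflexivity | now rewrite src_comp].
    + rewrite push_cons by assumption. eauto.
Qed.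

Lemma push_singleton (x a : S) (w : list S) :
  ~ is_id S x -> push x w = [a] -> leS x a.
Proof.
  intros I E. destruct w as [|z [|z' w]].
  - rewrite push_nil in E by exact I. injection E as <-. apply leS_refl.
  - destruct (classic (defined S x z)) as [D|D].
    + rewrite push_merge in E by assumption. injection E as <-. now exists z.
    + now rewrite push_cons in E.
  - destruct (classic (defined S x z)) as [D|D].
    + now rewrite push_merge in E.
    + now rewrite push_cons in E.
Qed.

Lemma umon_eq_push (x : S) (w : list S) : umon_eq (x :: w) (push x w).
Proof.
  destruct (classic (is_id S x)) as [I|I].
  - rewrite push_id by exact I. exact (ue_ctx [] w (ue_id I)).
  - destruct w as [|z w].
    + rewrite push_nil by exact I. apply ue_refl.
    + destruct (classic (defined S x z)) as [D|D].
      * rewrite push_merge by assumption. exact (ue_ctx [] w (ue_mul D)).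
      * rewrite push_cons by assumption. apply ue_refl.
Qed.

Lemma umon_eq_nf (u : list S) : umon_eq u (nf u).
Proof.
  induction u as [|x u IH]; [apply ue_refl|].
  apply ue_trans with (x :: nf u); [apply umon_eq_cons, IH | apply umon_eq_push].
Qed.

Lemma nf_app (u v : list S) : nf (u ++ v) = pushs u (nf v).
Proof. apply fold_right_app. Qed.

Lemma pushs_reduced_cons (x : S) (u w : list S) : reduced (x :: u) ->
  exists h t, pushs (x :: u) w = h :: t /\ src h = src x /\ length u <= length t.
Proof.
  revert x. induction u as [|y u IH]; intros x R.
  - destruct R as [I _]. destruct (push_head w I) as [h [t [E Eh]]].
    exists h, t. repeat split; [exact E | exact Eh | apply le_0_n].
  - destruct R as [I [D R]]. destruct (IH y R) as [h [t [E [Eh Hl]]]].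
    change (pushs (x :: y :: u) w) with (push x (pushs (y :: u) w)).
    rewrite E, push_cons; [|exact I | unfold defined; now rewrite Eh].
    exists x, (h :: t). repeat split. simpl. apply le_n_S, Hl.
Qed.

Lemma nf_eps_id (a : S) : is_id S a -> nf (eps a) = [].
Proof. apply push_id. Qed.

Lemma nf_eps_nid (a : S) : ~ is_id S a -> nf (eps a) = eps a.
Proof. apply push_nil. Qed.

Hypothesis conical_S : conical S.

Lemma push_reduced (x : S) (w : list S) : reduced w -> reduced (push x w).
Proof.
  intro R. destruct (classic (is_id S x)) as [I|I]; [now rewrite push_id|].
  destruct w as [|z w]; [rewrite push_nil by exact I; simpl; tauto|].
  destruct (classic (defined S x z)) as [D|D].
  - rewrite push_merge by assumption. destruct R as [_ [Dz R]].
    split; [intro J; exact (I (conical_S D J))|]. split; [|exact R].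
    destruct w as [|y w]; [exact Logic.I|].
    unfold defined. rewrite tgt_comp by exact D. exact Dz.
  - rewrite push_cons by assumption. simpl in R |- *. tauto.
Qed.

Lemma pushs_reduced (u w : list S) : reduced w -> reduced (pushs u w).
Proof. intro R. induction u as [|x u IH]; [exact R | apply push_reduced, IH]. Qed.

Lemma nf_reduced (u : list S) : reduced (nf u).
Proof. apply pushs_reduced. exact Logic.I. Qed.

Lemma push_comp (x y : S) (w : list S) : reduced w -> defined S x y ->
  push (comp x y) w = push x (push y w).
Proof.
  intros R D.
  destruct (classic (is_id S x)) as [Ix|Ix].
  { rewrite comp_id_l by assumption. now rewrite (push_id _ Ix). }
  destruct (classic (is_id S y)) as [Iy|Iy].
  { rewrite comp_id_r by assumption. now rewrite (push_id _ Iy). }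
  assert (Ixy : ~ is_id S (comp x y)) by (intro J; exact (Ix (conical_S D J))).
  destruct w as [|z w].
  - rewrite !push_nil, push_merge by assumption. reflexivity.
  - destruct (classic (defined S y z)) as [Dyz|Dyz].
    + assert (D1 : defined S (comp x y) z)
        by (unfold defined in *; now rewrite tgt_comp).
      assert (D2 : defined S x (comp y z))
        by (unfold defined in *; now rewrite src_comp).
      rewrite !push_merge by assumption. f_equal. apply compA; assumption.
    + assert (D1 : ~ defined S (comp x y) z)
        by (unfold defined in *; now rewrite tgt_comp).
      rewrite push_cons, (push_cons (x := y)), push_merge by assumption. reflexivity.
Qed.

Lemma pushs_push (x : S) (v w : list S) : reduced w ->
  pushs (push x v) w = push x (pushs v w).
Proof.
  intro R. destruct (classic (is_id S x)) as [I|I]; [now rewrite !push_id|].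
  destruct v as [|y v]; [now rewrite push_nil|].
  destruct (classic (defined S x y)) as [D|D].
  - rewrite push_merge by assumption.
    apply push_comp; [apply pushs_reduced, R | exact D].
  - now rewrite push_cons.
Qed.

Lemma pushs_nf (u w : list S) : reduced w -> pushs u w = pushs (nf u) w.
Proof.
  intro R. induction u as [|x u IH]; [reflexivity|].
  change (push x (pushs u w) = pushs (push x (nf u)) w).
  now rewrite IH, pushs_push.
Qed.

Lemma nf_umon_eq (u v : list S) : umon_eq u v -> nf u = nf v.
Proof.
  induction 1.
  - now apply nf_eps_id.
  - symmetry. apply push_comp; [exact Logic.I | assumption].
  - reflexivity.
  - auto.
  - congruence.
  - rewrite !nf_app, (pushs_nf u), (pushs_nf v), IHumon_eq by apply nf_reduced.
    reflexivity.
Qed.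

Lemma eps_inj (c c' : S) : ~ is_id S c -> umon_eq (eps c) (eps c') -> c = c'.
Proof.
  intros I E. apply nf_umon_eq in E. rewrite (nf_eps_nid I) in E.
  destruct (classic (is_id S c')) as [I'|I'].
  - now rewrite nf_eps_id in E.
  - rewrite nf_eps_nid in E by exact I'. now injection E.
Qed.

Lemma leU_eps_iff (u : list S) (a : S) :
  leU u (eps a) <-> exists c, leS c a /\ umon_eq u (eps c).
Proof.
  split.
  - intros [w Hw]. apply nf_umon_eq in Hw.
    rewrite nf_app, pushs_nf in Hw by apply nf_reduced.
    pose proof (umon_eq_nf u) as Hu. pose proof (nf_reduced u) as Ru.
    destruct (nf u) as [|x u'].
    + exists (src a). split; [apply leS_src|].
      apply ue_trans with []; [exact Hu|]. apply ue_sym, ue_id, src_src.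
    + destruct (pushs_reduced_cons (nf w) Ru) as [h [t [E [_ Hl]]]].
      rewrite E in Hw. destruct (classic (is_id S a)) as [Ia|Ia].
      { now rewrite nf_eps_id in Hw. }
      rewrite nf_eps_nid in Hw by exact Ia. injection Hw as <- <-.
      destruct u'; [|inversion Hl].
      exists x. split; [|exact Hu].
      apply push_singleton with (nf w); [apply Ru | exact E].
  - intros [c [Hc Hu]]. apply leU_eq_l with (eps c); [exact Hu|].
    apply leU_eps_of_leS, Hc.
Qed.

Lemma leS_of_leU_eps (c a : S) : src c = src a -> leU (eps c) (eps a) -> leS c a.
Proof.
  intros Hs H. apply leU_eps_iff in H as [c' [Hc' E]].
  destruct (classic (is_id S c)) as [I|I].
  - unfold is_id in I. rewrite <- I, Hs. apply leS_src.
  - now rewrite (eps_inj I E).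
Qed.

Lemma is_glb_eps_of_glb_leS (a b d : S) :
  is_glb leS a b d -> is_glb leU (eps a) (eps b) (eps d).
Proof.
  intros [Da [Db Dm]].
  split; [now apply leU_eps_of_leS | split; [now apply leU_eps_of_leS|]].
  intros h Ha Hb.
  apply leU_eps_iff in Ha as [c [Hca Ec]]. apply leU_eps_iff in Hb as [c' [Hcb Ec']].
  apply leU_eq_l with (eps c); [exact Ec|]. apply leU_eps_of_leS.
  destruct (classic (is_id S c)) as [I|I].
  - rewrite (leS_id_src I Hca), <- (leS_src_eq Da). apply leS_src.
  - apply Dm; [exact Hca|]. rewrite (eps_inj (c' := c') I); [exact Hcb|].
    apply ue_trans with h; [apply ue_sym, Ec | exact Ec'].
Qed.

Lemma glb_leS_of_glb_eps (a b d : S) : src d = src a -> src a = src b ->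
  is_glb leU (eps a) (eps b) (eps d) -> is_glb leS a b d.
Proof.
  intros Hda Hab [Da [Db Dm]]. split; [|split].
  - now apply leS_of_leU_eps.
  - apply leS_of_leU_eps; [congruence | exact Db].
  - intros h Ha Hb. apply leS_of_leU_eps.
    + rewrite (leS_src_eq Ha). congruence.
    + apply Dm; now apply leU_eps_of_leS.
Qed.

Lemma ex_glb_leS_of_glb_leU (a b : S) (g : list S) : src a = src b ->
  is_glb leU (eps a) (eps b) g -> exists d, is_glb leS a b d.
Proof.
  intros Hab G. destruct (proj1 (leU_eps_iff g a) (proj1 G)) as [c [Hca Ec]].
  exists c. apply glb_leS_of_glb_eps; [exact (leS_src_eq Hca) | exact Hab|].
  exact (is_glb_leU_eq Ec G).
Qed.

End Category.

Definition op (S : category) : category :=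
  @Category S (@tgt S) (@src S) (fun x y => comp y x)
    (@tgt_tgt S) (@src_tgt S) (@tgt_src S) (@src_src S)
    (fun x y H => @tgt_comp S y x (eq_sym H))
    (fun x y H => @src_comp S y x (eq_sym H))
    (@comp_tgt S) (@comp_src S)
    (fun x y z H1 H2 => eq_sym (@compA S z y x (eq_sym H2) (eq_sym H1))).

Section Duality.
Variable S : category.

Lemma op_conical : conical S -> conical (op S).
Proof.
  intros Hc x y D I.
  assert (Ixy : is_id S (@comp S y x)) by exact (proj2 (@is_id_iff_tgt S _) I).
  assert (Iy : is_id S y) by exact (Hc y x (eq_sym D) Ixy).
  apply (@is_id_iff_tgt S x). rewrite <- (comp_id_l Iy (eq_sym D)). exact Ixy.
Qed.

Lemma umon_eq_rev_op (u v : list S) :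
  umon_eq u v -> @umon_eq (op S) (rev u) (rev v).
Proof.
  induction 1; simpl.
  - apply (@ue_id (op S)). exact (proj1 (@is_id_iff_tgt S e) H).
  - apply (@ue_mul (op S) y x). symmetry. exact H.
  - apply ue_refl.
  - now apply ue_sym.
  - eapply ue_trans; eauto.
  - rewrite !rev_app_distr, <- !app_assoc. exact (@ue_ctx (op S) _ _ _ _ IHumon_eq).
Qed.

Lemma umon_eq_rev_of_op (u v : list S) :
  @umon_eq (op S) u v -> umon_eq (rev u) (rev v).
Proof.
  induction 1; simpl.
  - apply ue_id. exact (proj2 (@is_id_iff_tgt S e) H).
  - apply (@ue_mul S y x). symmetry. exact H.
  - apply ue_refl.
  - now apply ue_sym.
  - eapply ue_trans; eauto.
  - rewrite !rev_app_distr, <- !app_assoc. now apply ue_ctx.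
Qed.

Lemma tleU_iff_leU_op (u v : list S) : tleU u v <-> @leU (op S) (rev u) (rev v).
Proof.
  split; intros [w H]; exists (rev w).
  - apply umon_eq_rev_op in H. now rewrite rev_app_distr in H.
  - apply umon_eq_rev_of_op in H. now rewrite rev_app_distr, !rev_involutive in H.
Qed.

Lemma tleS_iff_leS_op (a b : S) : tleS a b <-> @leS (op S) a b.
Proof. split; intros [x [D E]]; exists x; split; auto; symmetry; exact D. Qed.

End Duality.

Lemma is_glb_transport (T : Type) (le1 le2 : T -> T -> Prop) (f : T -> T) :
  (forall x, f (f x) = x) -> (forall x y, le1 x y <-> le2 (f x) (f y)) ->
  forall x y g, is_glb le1 x y g <-> is_glb le2 (f x) (f y) (f g).
Proof.
  intros Inv Hle x y g. unfold is_glb. rewrite !Hle. split.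
  - intros [A [B C]]. split; [exact A | split; [exact B|]]. intros h H1 H2.
    rewrite <- (Inv h) in H1, H2 |- *. rewrite <- Hle in H1, H2 |- *. auto.
  - intros [A [B C]]. split; [exact A | split; [exact B|]]. intros h H1 H2.
    rewrite Hle in H1, H2 |- *. auto.
Qed.

Section RightGcd.
Variable S : category.

Lemma is_glb_tleU_iff_op (x y g : list S) :
  is_glb tleU x y g <-> is_glb (@leU (op S)) (rev x) (rev y) (rev g).
Proof. apply (@is_glb_transport (list S) (@tleU S) (@leU (op S)) (@rev S)); [apply rev_involutive | apply tleU_iff_leU_op]. Qed.

Lemma is_glb_tleS_iff_op (a b d : S) :
  is_glb tleS a b d <-> is_glb (@leS (op S)) a b d.
Proof. apply (@is_glb_transport S (@tleS S) (@leS (op S)) (fun x => x)); [reflexivity | apply tleS_iff_leS_op]. Qed.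

Hypothesis conical_S : conical S.

Lemma is_glb_eps_of_glb_tleS (a b d : S) :
  is_glb tleS a b d -> is_glb tleU (eps a) (eps b) (eps d).
Proof.
  intro H. apply is_glb_tleU_iff_op.
  apply (is_glb_eps_of_glb_leS (op_conical conical_S)), is_glb_tleS_iff_op, H.
Qed.

Lemma ex_glb_tleS_of_glb_tleU (a b : S) (g : list S) : tgt a = tgt b ->
  is_glb tleU (eps a) (eps b) g -> exists d, is_glb tleS a b d.
Proof.
  intros Hab G. apply is_glb_tleU_iff_op in G.
  destruct (ex_glb_leS_of_glb_leU (op_conical conical_S) Hab G) as [d Hd].
  exists d. now apply is_glb_tleS_iff_op.
Qed.

End RightGcd.

Theorem corollary5p7 (S : category) (a b : S) :
  conical S ->
  (left_cancellative S -> src a = src b ->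
     ((exists g, is_glb (@leU S) (eps a) (eps b) g) <->
      (exists d, is_glb (@leS S) a b d)) /\
     (forall d, is_glb (@leS S) a b d ->
        is_glb (@leU S) (eps a) (eps b) (eps d))) /\
  (right_cancellative S -> tgt a = tgt b ->
     ((exists g, is_glb (@tleU S) (eps a) (eps b) g) <->
      (exists d, is_glb (@tleS S) a b d)) /\
     (forall d, is_glb (@tleS S) a b d ->
        is_glb (@tleU S) (eps a) (eps b) (eps d))).
Proof.
  intro Hc. split; intros _ Hab; split; [split| |split|].
  - intros [g G]. exact (ex_glb_leS_of_glb_leU Hc Hab G).
  - intros [d D]. exists (eps d). exact (is_glb_eps_of_glb_leS Hc D).
  - intro d. apply (is_glb_eps_of_glb_leS Hc).
  - intros [g G]. exact (ex_glb_tleS_of_glb_tleU Hc Hab G).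
  - intros [d D]. exists (eps d). exact (is_glb_eps_of_glb_tleS Hc D).
  - intro d. apply (is_glb_eps_of_glb_tleS Hc).
Qed.
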